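(* Let $a_1,a_2\in\mathbb R$ and set $b_1=a_1-a_2$, $b_2=a_1-1$. Then $(a_1,a_2)$ is a good pair if and only if $(b_1,b_2)$ is a good pair.
   Context: For $x\in\mathbb R$, $[x]_2$ denotes the unique number in $[-1,1)$ congruent to $x$ modulo $2\mathbb Z$. A pair $(a_1,a_2)$ of real numbers is a good pair if none of $a_1,a_2,a_1-a_2$ is an integer and $[a_1]_2\,[a_2]_2>0$ and $|[a_1]_2|<|[a_2]_2|$. *)

From Stdlib Require Import Reals.
Open Scope R_scope.

Definition is_int (x : R) : Prop := exists z : Z, x = IZR z.

(* [x]_2 : the unique number in [-1,1) congruent to x modulo 2Z,
   namely x - 2 * floor((x+1)/2). *)
Definition red2 (x : R) : R := x - 2 * IZR (Int_part ((x + 1) / 2)).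

Definition good_pair (a1 a2 : R) : Prop :=
  ~ is_int a1 /\ ~ is_int a2 /\ ~ is_int (a1 - a2) /\
  red2 a1 * red2 a2 > 0 /\ Rabs (red2 a1) < Rabs (red2 a2).

From Stdlib Require Import Reals Lra Lia.
Open Scope R_scope.

(** Both integrality and [red2] are blind to shifts by even integers, so a
    pair is good exactly when its reduced representatives [x, y] in [[-1,1)]
    satisfy [0 < x < y] or [-1 < y < x < 0].  For [x = red2 a1] and
    [y = red2 a2] the new pair reduces to [red2 (x - y)] and [x + 1] or [x - 1],
    and the two descriptions match case by case. *)

Lemma red2_bounds (x : R) : -1 <= red2 x < 1.
Proof.
  unfold red2; destruct (base_Int_part ((x + 1) / 2)); lra.
Qed.

Lemma red2_decomp (x : R) : exists k : Z, x = red2 x + 2 * IZR k.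
Proof.
  exists (Int_part ((x + 1) / 2)); unfold red2; ring.
Qed.

Lemma red2_eq (x t : R) (k : Z) : -1 <= t < 1 -> x = t + 2 * IZR k -> red2 x = t.
Proof.
  intros Ht Hx.
  destruct (red2_decomp x) as [n Hn]; pose proof (red2_bounds x).
  assert (Hkn : red2 x - t = 2 * IZR (k - n)) by (rewrite minus_IZR; lra).
  assert (Hlt : (-1 < k - n < 1)%Z) by (split; apply lt_IZR; lra).
  replace (k - n)%Z with 0%Z in Hkn by lia.
  simpl in Hkn; lra.
Qed.

Lemma red2_id (t : R) : -1 <= t < 1 -> red2 t = t.
Proof.
  intros Ht; apply (red2_eq t t 0); [exact Ht | simpl; ring].
Qed.

Lemma is_int_add_int (x : R) (z : Z) : is_int (x + IZR z) <-> is_int x.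
Proof.
  unfold is_int; split; intros [w Hw].
  - exists (w - z)%Z; rewrite minus_IZR; lra.
  - exists (w + z)%Z; rewrite plus_IZR; lra.
Qed.

Lemma not_is_int_between (t : R) (z : Z) : IZR z < t < IZR z + 1 -> ~ is_int t.
Proof.
  intros Ht [w ->].
  assert (Hw : (z < w < z + 1)%Z) by (rewrite <- plus_IZR in Ht; split; apply lt_IZR; lra).
  lia.
Qed.

Lemma good_pair_red2 (a b : R) : good_pair a b <-> good_pair (red2 a) (red2 b).
Proof.
  destruct (red2_decomp a) as [m Hm], (red2_decomp b) as [p Hp].
  assert (Ha : a = red2 a + IZR (2 * m)) by (rewrite mult_IZR; lra).
  assert (Hb : b = red2 b + IZR (2 * p)) by (rewrite mult_IZR; lra).
  assert (Hab : a - b = red2 a - red2 b + IZR (2 * m - 2 * p))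
    by (rewrite minus_IZR, !mult_IZR; lra).
  unfold good_pair.
  rewrite (red2_id (red2 a)), (red2_id (red2 b)) by apply red2_bounds.
  rewrite Ha at 1; rewrite Hb at 1; rewrite Hab, !is_int_add_int.
  tauto.
Qed.

Lemma good_pair_reduced (x y : R) : -1 <= x < 1 -> -1 <= y < 1 ->
  good_pair x y <-> 0 < x < y \/ (-1 < y /\ y < x /\ x < 0).
Proof.
  intros Hx Hy; unfold good_pair; rewrite (red2_id x), (red2_id y) by assumption; split.
  - intros (_ & Hyi & _ & Hxy & Habs).
    assert (Hy1 : y <> -1) by (intros ->; apply Hyi; exists (-1)%Z; reflexivity).
    revert Habs; unfold Rabs; repeat destruct Rcase_abs; intros Habs.
    all: try (left; nra); try (right; nra); exfalso; nra.
  - intros [H | H]; repeat split.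
    all: try (apply (not_is_int_between _ 0); simpl; lra).
    all: try (apply (not_is_int_between _ (-1)); simpl; lra).
    all: try nra.
    all: unfold Rabs; repeat destruct Rcase_abs; lra.
Qed.

Theorem lemma6p1 (a1 a2 : R) :
  good_pair a1 a2 <-> good_pair (a1 - a2) (a1 - 1).
Proof.
  rewrite (good_pair_red2 a1 a2), (good_pair_red2 (a1 - a2) (a1 - 1)).
  rewrite !good_pair_reduced by apply red2_bounds.
  destruct (red2_decomp a1) as [m Hm], (red2_decomp a2) as [p Hp].
  pose proof (red2_bounds a1); pose proof (red2_bounds a2).
  set (x := red2 a1) in *; set (y := red2 a2) in *.
  assert (Hsub : red2 (a1 - 1) = if Rlt_dec x 0 then x + 1 else x - 1).
  { destruct (Rlt_dec x 0).
    - apply red2_eq with (m - 1)%Z; [lra | rewrite minus_IZR; simpl; lra].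
    - apply red2_eq with m; lra. }
  assert (Hdiff : red2 (a1 - a2) =
    if Rlt_dec (x - y) (-1) then x - y + 2
    else if Rlt_dec (x - y) 1 then x - y else x - y - 2).
  { destruct (Rlt_dec (x - y) (-1)); [|destruct (Rlt_dec (x - y) 1)].
    - apply red2_eq with (m - p - 1)%Z; [lra | rewrite !minus_IZR; simpl; lra].
    - apply red2_eq with (m - p)%Z; [lra | rewrite !minus_IZR; lra].
    - apply red2_eq with (m - p + 1)%Z; [lra | rewrite plus_IZR, !minus_IZR; simpl; lra]. }
  rewrite Hsub, Hdiff.
  destruct (Rlt_dec x 0), (Rlt_dec (x - y) (-1)); try destruct (Rlt_dec (x - y) 1); lra.
Qed.
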